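(* For every integer $m\ge0$ and every integer $l>1$, \[ \mu_l^{(1,m+2)}=2P_{l-1}^{\{-2,-1,m\}} . \]
   Context: An $n$-board is the strip $[0,n]\times[0,1]$ divided into unit cells, each split into a left and a right half (slot). A $(w,g;t)$-comb is a tile consisting of a row of $t$ rectangles (teeth) of size $w\times1$, consecutive teeth separated by a gap of width $g$; gaps are not part of the tile and may be occupied by other tiles. (A $(\frac12,\frac12;1)$-comb is a half-square $\frac12\times1$.) A tiling is a placement of translated (unrotated) combs whose teeth cover the board exactly without overlap. Given a tiling of an $n$-board, an integer $x$ with $0<x<n$ is a cut point if every comb has all of its teeth in $[0,x]$ or all in $[x,n]$. A metatile of length $l$ is a tiling of an $l$-board with no cut point. A metatile is mixed if it contains combs of more than one type. For integers $1\le m_1<m_2$, $\mu_l^{(m_1,m_2)}$ is the number of mixed metatiles of length $l$ when tiling with $(\frac12,\frac12;m_1)$- and $(\frac12,\frac12;m_2)$-combs. For a finite set $W$ of integers, $P_n^W$ is the number of permutations $\pi$ of $\{1,\dots,n\}$ with $\pi(i)-i\in W$ for all $i$ (equivalently, the permanent of the $n\times n$ $(0,1)$ matrix whose $(i,j)$ entry is $1$ iff $j-i\in W$), with $P_0^W=1$. *)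

From mathcomp Require Import all_boot all_order all_algebra all_fingroup.
Unset Printing Implicit Defensive.

(* Board of length n: 2n slots (half-cells) numbered 0 .. 2n-1; slot j is the
   interval [j/2, (j+1)/2].  A (1/2,1/2;t)-comb placed with its leftmost tooth on
   slot s has teeth on slots s, s+2, ..., s+2(t-1).
   A placement is a pair (b, s) with b : bool the comb type (false -> m1-comb,
   true -> m2-comb) and s the slot of the leftmost tooth. *)

Definition ctype (m1 m2 : nat) (b : bool) : nat := if b then m2 else m1.

Definition teeth (m1 m2 : nat) (b : bool) (s : nat) : seq nat :=
  [seq s + k.*2 | k <- iota 0 (ctype m1 m2 b)].

Definition is_tiling (m1 m2 n : nat) (T : {set bool * 'I_(n.*2)}) : bool :=
  [forall p in T, all (fun j => j < n.*2) (teeth m1 m2 p.1 p.2)] &&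
  [forall j : 'I_(n.*2),
     #|[set p in T | (j : nat) \in teeth m1 m2 p.1 p.2]| == 1].

Definition is_cut_point (m1 m2 n : nat) (T : {set bool * 'I_(n.*2)}) (x : nat) : bool :=
  [forall p in T, all (fun j => j < x.*2) (teeth m1 m2 p.1 p.2)
               || all (fun j => x.*2 <= j) (teeth m1 m2 p.1 p.2)].

Definition is_metatile (m1 m2 l : nat) (T : {set bool * 'I_(l.*2)}) : bool :=
  is_tiling m1 m2 l T &&
  [forall x : 'I_l, (0 < x) ==> ~~ is_cut_point m1 m2 l T x].

Definition is_mixed (l : nat) (T : {set bool * 'I_(l.*2)}) : bool :=
  [exists p in T, ~~ p.1] && [exists p in T, p.1].

Definition mu (m1 m2 l : nat) : nat :=
  #|[set T : {set bool * 'I_(l.*2)} | is_metatile m1 m2 l T && is_mixed l T]|.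

Definition P (W : seq int) (n : nat) : nat :=
  #|[set s : 'S_n | [forall i : 'I_n, ((s i)%:Z - (i : nat)%:Z)%R \in W]]|.

(* Mixed metatiles of length l correspond two-to-one, and the permutations one-to-one, to
   the sets of cells described by [admissible].
   The left halves and the right halves of the cells form two rows, and an (m+2)-comb covers
   m+2 consecutive cells of a single row. Record the cells where the combs of a mixed
   metatile start: two combs of one row never overlap, so at most two combs cover a cell, and
   there is no cut point, so every interior boundary is spanned by a comb. Conversely, in a
   mixed metatile consecutive combs lie in alternate rows (two combs starting in the same
   cell would fill the board), so the metatile is determined by its start cells and by the
   row of its first comb, and every admissible set with either choice of row is realised.
   On the permutation side pi(i) - i is -2, -1 or m; record the positions of the long jumps
   pi(i) = i + m. As many positions jump up across any cut as jump down, and the down jumps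
   are short, which yields the same three conditions; and a permutation is rebuilt from its
   long jumps, position by position. *)

From mathcomp Require Import all_boot all_order all_algebra all_fingroup.
From mathcomp Require Import zify.

Definition count_range (f : pred nat) (lo hi : nat) : nat := \sum_(lo <= x < hi) f x.

Section CountRange.
Variable f : pred nat.

Lemma count_range_geq lo hi : hi <= lo -> count_range f lo hi = 0.
Proof. exact: big_geq. Qed.

Lemma count_range_cat lo mid hi : lo <= mid -> mid <= hi ->
  count_range f lo hi = count_range f lo mid + count_range f mid hi.
Proof. exact: big_cat_nat. Qed.

Lemma count_range_recr lo hi : lo <= hi ->
  count_range f lo hi.+1 = count_range f lo hi + f hi.
Proof. exact: big_nat_recr. Qed.

Lemma count_range1 x : count_range f x x.+1 = f x.
Proof. exact: big_nat1. Qed.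

Lemma count_range_le lo hi : count_range f lo hi <= hi - lo.
Proof.
rewrite -[hi - lo]muln1 -sum_nat_const_nat; apply: leq_sum => x _; exact: leq_b1.
Qed.

Lemma count_range_sub lo' lo hi hi' : lo' <= lo -> hi <= hi' ->
  count_range f lo hi <= count_range f lo' hi'.
Proof.
move=> le_lo le_hi; have [lt_hl | le_lh] := ltnP hi lo.
  by rewrite count_range_geq // ltnW.
rewrite (@count_range_cat lo' lo hi') ?(leq_trans le_lh) //.
rewrite (@count_range_cat lo hi hi') //; lia.
Qed.

Lemma count_range_split {lo hi x} : lo <= x < hi -> f x ->
  count_range f lo hi = count_range f lo x + 1 + count_range f x.+1 hi.
Proof.
move=> /andP [le_lx lt_xh] fx.
rewrite (@count_range_cat lo x) ?(ltnW lt_xh) // (@count_range_cat x x.+1) //.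
by rewrite count_range1 fx addnA.
Qed.

Lemma count_range_gt0 {lo hi} x : lo <= x < hi -> f x -> 0 < count_range f lo hi.
Proof. by move=> hx fx; rewrite (count_range_split hx fx) addn1 ltn_addr. Qed.

Lemma count_range_last {lo hi} : 0 < count_range f lo hi ->
  exists2 x, lo <= x < hi /\ f x & count_range f lo hi = (count_range f lo x).+1.
Proof.
elim: hi => [|h IH]; first by rewrite count_range_geq.
have [le_lh | lt_hl] := leqP lo h; last by rewrite count_range_geq.
rewrite count_range_recr //; case fh: (f h) => /=.
  by move=> _; exists h; rewrite ?addn1 ?le_lh ?leqnn.
rewrite addn0 => /IH [x [hx fx] ->]; exists x => //; split => //; lia.
Qed.

Lemma count_range_gt2 {lo hi} : 2 < count_range f lo hi ->
  exists a b c, [/\ lo <= a, a < b, b < c, c < hi & [/\ f a, f b & f c]].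
Proof.
move=> gt2; have [|c [hc fc] Ec] := @count_range_last lo hi; first lia.
have [|b [hb fb] Eb] := @count_range_last lo c; first lia.
have [|a [ha fa] Ea] := @count_range_last lo b; first lia.
by exists a, b, c; split; try lia; split.
Qed.

End CountRange.

Lemma eq_count_range (f g : pred nat) {lo hi} : f =1 g -> count_range f lo hi = count_range g lo hi.
Proof. by move=> efg; apply: eq_bigr => x _; rewrite efg. Qed.

Section Admissible.
Variables (m l : nat).

(* [f c] says that a comb starts in cell [c] (resp. that [pi c = c + m]): each comb fits on
   the board, at most two combs cover a cell, and each boundary [x] is crossed by a comb
   starting in one of the m + 1 cells before it. *)
Definition admissible (f : pred nat) :=
  [/\ forall x, f x -> x + m + 2 <= l,
      forall c, c < l -> count_range f (c - m.+1) c.+1 <= 2 &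
      forall x, 0 < x < l -> 0 < count_range f (x - m.+1) x].

Lemma eq_admissible f g : f =1 g -> admissible f -> admissible g.
Proof.
move=> efg [fit window cover].
split=> [x | c | x]; rewrite -?efg -?(eq_count_range _ _ efg).
- exact: fit.
- exact: window.
- exact: cover.
Qed.

Variable f : pred nat.
Hypothesis adm_f : admissible f.

Lemma admissible_fit x : f x -> x + m + 2 <= l.
Proof. by case: adm_f => fit _ _; exact: fit. Qed.

Lemma admissible_lt x : f x -> x < l.
Proof. by move/admissible_fit; lia. Qed.

Lemma admissible_window lo hi : hi <= lo + m + 2 -> hi <= l -> count_range f lo hi <= 2.
Proof.
case: hi => [|h] le_h le_hl; first by rewrite count_range_geq.
case: adm_f => _ window _; apply: leq_trans (window h le_hl).
apply: count_range_sub; lia.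
Qed.

Lemma admissible_cover x : 0 < x < l -> exists2 c, x - m.+1 <= c < x & f c.
Proof.
case: adm_f => _ _ cover /cover /count_range_last [c [hc fc] _].
by exists c.
Qed.

Lemma admissible_cover_count lo hi x : 0 < x < l -> lo <= x - m.+1 -> x <= hi ->
  0 < count_range f lo hi.
Proof.
move=> /admissible_cover [c hc fc] le_lo le_hi.
by apply: (count_range_gt0 _ c) fc; lia.
Qed.

Lemma admissible_start0 : 1 < l -> f 0.
Proof. by move=> gt1l; have [c] := @admissible_cover 1 gt1l; case: c. Qed.

End Admissible.

Arguments admissible_fit {m l f} adm_f {x}.
Arguments admissible_lt {m l f} adm_f {x}.
Arguments admissible_window {m l f} adm_f {lo hi}.
Arguments admissible_cover {m l f} adm_f {x}.
Arguments admissible_cover_count {m l f} adm_f {lo hi x}.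
Arguments admissible_start0 {m l f}.

Definition jumps_in (W : seq int) {n : nat} (s : 'S_n) :=
  [forall i : 'I_n, ((s i)%:Z - (i : nat)%:Z)%R \in W].

Section LongJumps.
Variables (m n : nat).
Local Notation W := [:: (-2)%Z; (-1)%Z; (m : int)].

Lemma mem_jumps (a b : nat) :
  ((a%:Z - b%:Z)%R \in W) = [|| a == b + m, a.+1 == b | a.+2 == b].
Proof.
rewrite !inE; apply/or3P/or3P => -[] /eqP e;
  [constructor 3 | constructor 2 | constructor 1 | constructor 3 | constructor 2 | constructor 1];
  apply/eqP; lia.
Qed.

Definition long_jump (s : 'S_n) (x : nat) :=
  [exists i : 'I_n, (i == x :> nat) && (s i == i + m :> nat)].

Lemma long_jump_ord s (i : 'I_n) : long_jump s i = (s i == i + m :> nat).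
Proof.
apply/existsP/idP => [[j /andP [/eqP/val_inj -> //]] | sj].
by exists i; rewrite eqxx.
Qed.

Lemma long_jumpP s x : long_jump s x -> exists2 i : 'I_n, i = x :> nat & s i = i + m :> nat.
Proof. by case/existsP => i /andP [/eqP <- /eqP si]; exists i. Qed.

Lemma card_crossings (s : 'S_n) t :
  #|[set i : 'I_n | i < t <= s i]| = #|[set i : 'I_n | s i < t <= i]|.
Proof.
set A := [set i : 'I_n | i < t]; set B := [set i : 'I_n | s i < t].
have card_AB : #|A| = #|B|.
  rewrite -(card_imset B (@perm_inj _ s)); suff -> : s @: B = A by [].
  apply/setP => j; rewrite inE; apply/imsetP/idP => [[i] | ltjt].
    by rewrite inE => ltit ->.
  by exists (s^-1 j)%g; rewrite ?inE permKV.
have -> : [set i : 'I_n | i < t <= s i] = A :\: B.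
  by apply/setP => i; rewrite !inE -leqNgt andbC.
have -> : [set i : 'I_n | s i < t <= i] = B :\: A.
  by apply/setP => i; rewrite !inE -leqNgt andbC.
by move: (cardsID B A) (cardsID A B); rewrite setIC; lia.
Qed.

Section AdmissiblePerm.
Variable s : 'S_n.
Hypothesis s_ok : jumps_in W s.

Lemma jump_cases (i : 'I_n) : [\/ s i = i + m :> nat, (s i).+1 = i | (s i).+2 = i].
Proof.
move/forallP: s_ok => /(_ i); rewrite mem_jumps.
by case/or3P => /eqP; [constructor 1 | constructor 2 | constructor 3].
Qed.

Lemma up_crossing_long {i : 'I_n} {t} : i < t <= s i -> s i = i + m :> nat.
Proof. by case: (jump_cases i); lia. Qed.

Lemma down_crossing_short {i : 'I_n} {t} : s i < t <= i -> i <= t.+1 /\ t <= (s i).+2.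
Proof. by case: (jump_cases i); lia. Qed.

Lemma long_jump_fit x : long_jump s x -> x + m + 2 <= n.+1.
Proof. by case/long_jumpP => i <- si; have := ltn_ord (s i); lia. Qed.

Lemma no_three_close_long_jumps (a b c : 'I_n) : a < b < c -> c <= a + m ->
  s a = a + m :> nat -> s b = b + m :> nat -> s c = c + m :> nat -> False.
Proof.
move=> /andP [ltab ltbc] lecam sa sb sc.
have : 1 < #|[set i : 'I_n | i < c <= s i]|.
  apply/card_gt1P; exists a, b; rewrite !inE; split; try lia.
  by apply: contraTneq ltab => ->; rewrite ltnn.
rewrite card_crossings => /card_gt1P [j1 [j2 []]]; rewrite !inE => dj1 dj2 /eqP ne12.
have ne12' : j1 <> j2 :> nat by move/val_inj.
have [le1 _] := down_crossing_short dj1; have [le2 _] := down_crossing_short dj2.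
have : j1 = c :> nat \/ j2 = c :> nat by lia.
by case=> /val_inj ejc; [move: dj1 | move: dj2]; rewrite ejc sc; lia.
Qed.

Lemma no_three_far_long_jumps (a b c : 'I_n) : a < b < c -> c = a + m.+1 :> nat ->
  s a = a + m :> nat -> s b = b + m :> nat -> s c = c + m :> nat -> False.
Proof.
move=> /andP [ltab ltbc] ecam sa sb sc.
(* c - 1 is already the image of a. *)
have land_c j : s j < c.+1 <= j -> s j = c :> nat.
  move=> dj; have [_ ge_sj] := down_crossing_short dj.
  suff : s j != s a :> nat by lia.
  by apply/eqP => /val_inj/perm_inj eja; move: dj; rewrite eja; lia.
have [eba | neba] := eqVneq (b : nat) a.+1.
- have : 0 < #|[set i : 'I_n | i < c.+1 <= s i]|.
    by apply/card_gt0P; exists c; rewrite inE sc; lia.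
  rewrite card_crossings => /card_gt0P [j]; rewrite inE => dj.
  have /val_inj/perm_inj ejb : s j = s b :> nat by rewrite land_c // sb; lia.
  by move: dj; rewrite ejb; lia.
- have : 1 < #|[set i : 'I_n | i < c.+1 <= s i]|.
    apply/card_gt1P; exists b, c; rewrite !inE; split; try lia.
    by apply: contraTneq ltbc => ->; rewrite ltnn.
  rewrite card_crossings => /card_gt1P [j1 [j2 []]]; rewrite !inE => /land_c s1 /land_c s2.
  have /val_inj/perm_inj -> : s j1 = s j2 :> nat by rewrite s1 s2.
  by rewrite eqxx.
Qed.

Lemma long_jump_window c : count_range (long_jump s) (c - m.+1) c.+1 <= 2.
Proof.
rewrite leqNgt; apply/negP => /count_range_gt2 [a [b [c' [lea ltab ltbc ltc []]]]].
case/long_jumpP => ia ea sa; case/long_jumpP => ib eb sb; case/long_jumpP => ic ec sc.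
have [close | far] := leqP ic (ia + m).
- by apply: (no_three_close_long_jumps _ _ _ _ close sa sb sc); lia.
- by apply: (no_three_far_long_jumps _ _ _ _ _ sa sb sc); lia.
Qed.

Lemma long_jump_cover x : 0 < x < n.+1 -> 0 < count_range (long_jump s) (x - m.+1) x.
Proof.
move=> /andP [x_gt0 le_xn]; rewrite lt0n; apply/negP => /eqP none.
have no_up (i : 'I_n) : i < x <= s i -> False.
  move=> ui; have si := up_crossing_long ui; move: none; apply/eqP; rewrite -lt0n.
  by apply: (count_range_gt0 _ i); [lia | rewrite long_jump_ord si].
have lt_xn : x.-1 < n by lia.
set j := (s^-1 (Ordinal lt_xn))%g; have sj : s j = x.-1 :> nat by rewrite permKV.
have [lexj | ltjx] := leqP x j.
- have : 0 < #|[set i : 'I_n | s i < x <= i]|.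
    by apply/card_gt0P; exists j; rewrite inE sj; lia.
  by rewrite -card_crossings => /card_gt0P [i]; rewrite inE => /no_up.
- have ej : s j = j + m :> nat by case: (jump_cases j); lia.
  move: none; apply/eqP; rewrite -lt0n.
  by apply: (count_range_gt0 _ j); [lia | rewrite long_jump_ord ej].
Qed.

Lemma admissible_long_jumps : admissible m n.+1 (long_jump s).
Proof.
split=> [x | c _ | x]; [exact: long_jump_fit | exact: long_jump_window | exact: long_jump_cover].
Qed.

End AdmissiblePerm.

Lemma agree_below_step2 {s t : 'S_n} {j : 'I_n} : jumps_in W s -> jumps_in W t ->
  (forall i : 'I_n, i < j -> s i = t i) -> (s j).+2 = j -> t j = s j.
Proof.
move=> s_ok t_ok below s2; set i := (t^-1 (s j))%g; have ti : t i = s j by rewrite permKV.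
have [ltij | ltji | /val_inj eij] := ltngtP i j; last by rewrite -ti eij.
- by move: (below i ltij); rewrite ti => /perm_inj eij; move: ltij; rewrite eij ltnn.
- by case: (jump_cases _ t_ok i); rewrite ti; lia.
Qed.

Lemma long_jump_inj s t : jumps_in W s -> jumps_in W t -> long_jump s =1 long_jump t -> s = t.
Proof.
move=> s_ok t_ok est.
suff agree k (j : 'I_n) : j < k -> s j = t j by apply/permP => j; apply: (agree j.+1).
elim: k j => [//|k IH] j; rewrite ltnS leq_eqVlt => /orP [/eqP ejk | ]; last exact: IH.
have below (i : 'I_n) : i < j -> s i = t i by rewrite ejk; exact: IH.
have := est j; rewrite !long_jump_ord => long.
have long_st : s j = j + m :> nat -> t j = j + m :> nat by move/eqP; rewrite long => /eqP.
have long_ts : t j = j + m :> nat -> s j = j + m :> nat by move/eqP; rewrite -long => /eqP.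
have below' (i : 'I_n) : i < j -> t i = s i by move/below.
case: (jump_cases _ s_ok j) => [sl | s1 | s2];
  last by rewrite (agree_below_step2 s_ok t_ok below s2).
all: case: (jump_cases _ t_ok j) => [tl | t1 | t2];
  last by rewrite (agree_below_step2 t_ok s_ok below' t2).
all: by apply: val_inj => /=; lia.
Qed.

Section LongJumpPerm.
Variable f : pred nat.
Hypotheses (n_gt0 : 0 < n) (adm_f : admissible m n.+1 f).

Definition back_by_two (i : nat) := count_range f (i - m.+1) i == 2.

Definition target (i : nat) := if f i then i + m else if back_by_two i then i - 2 else i - 1.

Lemma target_lt {i} : i < n -> target i < n.
Proof.
rewrite /target; case fi: (f i) => lt_in; last by case: back_by_two; lia.
by have := admissible_fit adm_f fi; lia.
Qed.

Lemma not_start_gt0 {i} : ~~ f i -> 0 < i.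
Proof. by case: i => // /negP[]; apply: (admissible_start0 adm_f). Qed.

Lemma back_by_two_gt1 {i} : back_by_two i -> 1 < i.
Proof. by move=> /eqP two; have := count_range_le f (i - m.+1) i; lia. Qed.

Lemma target_long_short {i j} : f i -> ~~ f j -> j < n -> target i != target j.
Proof.
move=> fi nfj lt_jn; have fit := admissible_fit adm_f fi.
have count_from_i k : i < k -> count_range f i k = (count_range f i.+1 k).+1.
  move=> lt_ik; rewrite (count_range_split f (_ : i <= i < k)) ?leqnn ?lt_ik //.
  by rewrite count_range_geq // add0n addn1.
rewrite /target fi (negbTE nfj); case: ifP => [two | /negbT one]; apply/eqP => eij.
- have ej : j = i + m + 2 by have := back_by_two_gt1 two; lia.
  have := admissible_window adm_f (leqnn (i + m + 2)) fit.
  move/eqP: two; rewrite ej (_ : i + m + 2 - m.+1 = i.+1) 1?count_from_i; lia.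
- have ej : j = i + m + 1 by have := not_start_gt0 nfj; lia.
  have := admissible_window adm_f (_ : i + m + 1 <= i + m + 2) (_ : i + m + 1 <= n.+1).
  have := admissible_cover_count adm_f (_ : 0 < i + m + 2 < n.+1) (_ : i.+1 <= _) (leqnn _).
  rewrite (_ : i + m + 2 = j.+1) ?count_range_recr ?(negbTE nfj) ?addn0; try lia.
  move: one; rewrite /back_by_two ej (_ : i + m + 1 - m.+1 = i) 1?count_from_i; lia.
Qed.

Lemma back_by_two_pred i : i < n -> ~~ f i -> back_by_two i.+1 -> back_by_two i.
Proof.
move=> lt_in; rewrite /back_by_two subSS count_range_recr ?leq_subr // => /negbTE ->.
rewrite addn0 => /eqP two.
have := admissible_window adm_f (_ : i <= i - m.+1 + m + 2) (_ : i <= n.+1).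
have := @count_range_sub f (i - m.+1) (i - m) i i (leq_sub2l i (leqnSn m)) (leqnn i).
lia.
Qed.

Lemma target_inj i j : i < n -> j < n -> target i = target j -> i = j.
Proof.
move=> lt_in lt_jn eij.
case fi: (f i); case fj: (f j).
- by move: eij; rewrite /target fi fj; lia.
- by have := target_long_short fi (negbT fj) lt_jn; rewrite eij eqxx.
- by have := target_long_short fj (negbT fi) lt_in; rewrite eij eqxx.
move: (not_start_gt0 (negbT fi)) (not_start_gt0 (negbT fj)) eij.
rewrite /target fi fj; case: ifP => bi; case: ifP => bj i_gt0 j_gt0 eij; last lia.
- by have := back_by_two_gt1 bi; have := back_by_two_gt1 bj; lia.
- have ei : i = j.+1 by have := back_by_two_gt1 bi; lia.
  by move: bi; rewrite ei => /(back_by_two_pred j lt_jn (negbT fj)); rewrite bj.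
- have ej : j = i.+1 by have := back_by_two_gt1 bj; lia.
  by move: bj; rewrite ej => /(back_by_two_pred i lt_in (negbT fi)); rewrite bi.
Qed.

Definition target_ord (i : 'I_n) : 'I_n := Ordinal (target_lt (ltn_ord i)).

Lemma target_ord_inj : injective target_ord.
Proof. by move=> i j /(congr1 val) /(target_inj _ _ (ltn_ord i) (ltn_ord j)) /val_inj. Qed.

Definition long_jump_perm : 'S_n := perm target_ord_inj.

Lemma long_jump_permE (i : 'I_n) : long_jump_perm i = target i :> nat.
Proof. by rewrite permE. Qed.

Lemma long_jump_perm_ok : jumps_in W long_jump_perm.
Proof.
apply/forallP => i; rewrite long_jump_permE mem_jumps /target.
case fi: (f i); first by rewrite eqxx.
have := not_start_gt0 (negbT fi); case: ifP => [/back_by_two_gt1 lt1i | _] lt0i.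
  by apply/or3P; constructor 3; apply/eqP; lia.
by apply/or3P; constructor 2; apply/eqP; lia.
Qed.

Lemma long_jump_permP : long_jump long_jump_perm =1 f.
Proof.
move=> x; apply/idP/idP => [/long_jumpP [i <-] | fx].
  rewrite long_jump_permE /target; case fi: (f i) => //.
  by have := not_start_gt0 (negbT fi); case: back_by_two; lia.
have lt_xn : x < n by have := admissible_fit adm_f fx; lia.
by rewrite -[x]/(Ordinal lt_xn : nat) long_jump_ord long_jump_permE /target fx.
Qed.

End LongJumpPerm.
End LongJumps.

Arguments admissible_long_jumps {m n s}.
Arguments long_jump_inj {m n s t}.

(* The parity of a slot is its row: the left or the right half of its cell. *)
Lemma mem_teeth_comb m s j :
  (j \in teeth 1 (m + 2) true s) = [&& s <= j, j <= s + (m + 1).*2 & odd j == odd s].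
Proof.
apply/mapP/idP => [[k] | /and3P [le_sj le_j /eqP odd_j]].
  by rewrite mem_iota => /= k_lt ->; apply/and3P; split; rewrite ?oddD ?odd_double ?addbF; lia.
by exists ((j - s) %/ 2); rewrite ?mem_iota /=; lia.
Qed.

Lemma mem_teeth_square m s j : (j \in teeth 1 (m + 2) false s) = (j == s).
Proof. by rewrite /teeth /= inE addn0. Qed.

Section Tilings.
Variables (m l : nat).
Local Notation slot := (bool * 'I_(l.*2))%type.
Local Notation teethp p := (teeth 1 (m + 2) p.1 p.2).
Local Notation mixed_metatile T := (is_metatile 1 (m + 2) l T && is_mixed l T).

Section Tiling.
Variable T : {set slot}.
Hypothesis T_tiling : is_tiling 1 (m + 2) l T.

Lemma tiling_teeth_lt {p j} : p \in T -> j \in teethp p -> j < l.*2.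
Proof. by case/andP: T_tiling => /forall_inP inside _ /inside /allP; apply. Qed.

Lemma tiling_cover j : j < l.*2 -> exists2 p, p \in T & j \in teethp p.
Proof.
move=> lt_j; case/andP: T_tiling => _ /forallP /(_ (Ordinal lt_j)) /cards1P [p Ep].
have : p \in [set q in T | j \in teethp q] by rewrite Ep set11.
by rewrite inE => /andP [Tp jp]; exists p.
Qed.

Lemma tiling_disjoint p q j : p \in T -> q \in T -> j \in teethp p -> j \in teethp q -> p = q.
Proof.
move=> Tp Tq jp jq; have lt_j := tiling_teeth_lt Tp jp.
case/andP: T_tiling => _ /forallP /(_ (Ordinal lt_j)) /cards1P [x Ex].
have : p \in [set q in T | j \in teethp q] by rewrite inE Tp jp.
have : q \in [set q in T | j \in teethp q] by rewrite inE Tq jq.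
by rewrite Ex !inE => /eqP -> /eqP ->.
Qed.

Lemma comb_fit (s : 'I_(l.*2)) : (true, s) \in T -> s %/ 2 + m + 2 <= l.
Proof.
move=> Ts; have := @tiling_teeth_lt _ (s + (m + 1).*2) Ts.
by rewrite mem_teeth_comb leqnn oddD odd_double addbF eqxx leq_addr => /(_ isT); lia.
Qed.

Lemma comb_overlap (s t : 'I_(l.*2)) : (true, s) \in T -> (true, t) \in T -> odd s = odd t ->
  s %/ 2 <= t %/ 2 + m + 1 -> t %/ 2 <= s %/ 2 + m + 1 -> s = t.
Proof.
move=> Ts Tt odd_st le_st le_ts; set c := maxn (s %/ 2) (t %/ 2).
have [] // : (true, s) = (true, t).
apply: (@tiling_disjoint _ _ (c.*2 + odd s)) => //.
all: rewrite /= mem_teeth_comb oddD odd_double oddb /= ?odd_st eqxx andbT /c.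
all: by apply/andP; split; lia.
Qed.

End Tiling.

Arguments tiling_cover {T} T_tiling {j}.
Arguments tiling_disjoint {T} T_tiling {p q} j.
Arguments comb_fit {T} T_tiling {s}.
Arguments comb_overlap {T} T_tiling {s t}.

Lemma not_cut_comb (T : {set slot}) x : ~~ is_cut_point 1 (m + 2) l T x ->
  exists2 s : 'I_(l.*2), (true, s) \in T & s %/ 2 < x <= s %/ 2 + m + 1.
Proof.
move/forall_inPn => [[[] s] /= Ts]; last by rewrite double0 addn0 !andbT; case: ltnP.
rewrite negb_or => /andP [/allPn [j1 + +] /allPn [j2 + +]].
rewrite !mem_teeth_comb -leqNgt -ltnNge => /and3P [? ? /eqP ?] ? /and3P [? ? /eqP ?] ?.
by exists s => //; lia.
Qed.

Lemma comb_not_cut (T : {set slot}) x (s : 'I_(l.*2)) : (true, s) \in T ->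
  s %/ 2 < x <= s %/ 2 + m + 1 -> ~~ is_cut_point 1 (m + 2) l T x.
Proof.
move=> Ts span; apply/forall_inPn; exists (true, s) => //; rewrite negb_or.
apply/andP; split; apply/allPn; [exists (s + (m + 1).*2) | exists (s : nat)].
all: rewrite ?mem_teeth_comb ?oddD ?odd_double ?eqxx ?addbF /=; try apply/andP; try split; lia.
Qed.

Definition comb_start (T : {set slot}) (c : nat) := [exists p in T, p.1 && (p.2 %/ 2 == c)].

Definition comb_at_slot1 (T : {set slot}) := [exists p in T, p.1 && (p.2 == 1 :> nat)].

Lemma comb_startP {T : {set slot}} {c} :
  comb_start T c -> exists2 s : 'I_(l.*2), (true, s) \in T & s %/ 2 = c.
Proof. by case/exists_inP => [[[] s]] // Ts /andP [_ /eqP <-]; exists s. Qed.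

Lemma comb_start_in {T : {set slot}} {s : 'I_(l.*2)} : (true, s) \in T -> comb_start T (s %/ 2).
Proof. by move=> Ts; apply/exists_inP; exists (true, s) => /=. Qed.

Section Metatile.
Variable T : {set slot}.
Hypotheses (T_meta : is_metatile 1 (m + 2) l T) (T_mixed : is_mixed l T).

Lemma metatile_tiling : is_tiling 1 (m + 2) l T.
Proof. by case/andP: T_meta. Qed.

Lemma metatile_span x : 0 < x < l ->
  exists2 s : 'I_(l.*2), (true, s) \in T & s %/ 2 < x <= s %/ 2 + m + 1.
Proof.
case/andP => x_gt0 lt_xl; apply: not_cut_comb.
by case/andP: T_meta => _ /forallP /(_ (Ordinal lt_xl)) /implyP; apply.
Qed.

Lemma admissible_comb_starts : admissible m l (comb_start T).
Proof.
have T_tiling := metatile_tiling.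
split=> [c | c _ | x].
- by case/comb_startP => s Ts <-; exact: (comb_fit T_tiling Ts).
- rewrite leqNgt; apply/negP => /count_range_gt2 [a [b [d [le_a ltab ltbd ltd []]]]].
  case/comb_startP => sa Ta ea; case/comb_startP => sb Tb eb; case/comb_startP => sd Td ed.
  have same_row (u v : 'I_(l.*2)) i j : (true, u) \in T -> (true, v) \in T -> odd u = odd v ->
      u %/ 2 = i -> v %/ 2 = j -> c - m.+1 <= i -> i < j -> j <= c -> False.
    move=> Tu Tv ouv eu ev le_i lt_ij le_j.
    have euv : u = v by apply: (comb_overlap T_tiling Tu Tv ouv); lia.
    by move: eu; rewrite euv ev; lia.
  have [oab | nab] := eqVneq (odd sa) (odd sb).
    by apply: (same_row _ _ _ _ Ta Tb oab ea eb); lia.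
  have [oad | nad] := eqVneq (odd sa) (odd sd).
    by apply: (same_row _ _ _ _ Ta Td oad ea ed); lia.
  have obd : odd sb = odd sd by move: nab nad; case: (odd sa); case: (odd sb); case: (odd sd).
  by apply: (same_row _ _ _ _ Tb Td obd eb ed); lia.
- case/metatile_span => s Ts span.
  by apply: (count_range_gt0 _ (s %/ 2)); [lia | exact: comb_start_in].
Qed.

Lemma twin_combs_fill {s t : 'I_(l.*2)} : (true, s) \in T -> (true, t) \in T ->
  s %/ 2 = t %/ 2 -> odd s != odd t -> s %/ 2 = 0 /\ s %/ 2 + m + 2 = l.
Proof.
have T_tiling := metatile_tiling.
move=> Ts Tt est ost; have fit := comb_fit T_tiling Ts.
have overlap_start (u : 'I_(l.*2)) : (true, u) \in T ->
    u %/ 2 <= s %/ 2 + m + 1 -> s %/ 2 <= u %/ 2 + m + 1 -> u %/ 2 = s %/ 2.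
  move=> Tu le_u le_s; have [ous | nus] := eqVneq (odd u) (odd s).
    by rewrite (comb_overlap T_tiling Tu Ts ous).
  have out : odd u = odd t by move: ost nus; case: (odd u); case: (odd s); case: (odd t).
  by rewrite (comb_overlap T_tiling Tu Tt out) //; lia.
split.
- case: (posnP (s %/ 2)) => // s_gt0.
  have /metatile_span [u Tu span] : 0 < s %/ 2 < l by lia.
  suff : u %/ 2 = s %/ 2 by lia.
  by apply: overlap_start Tu _ _; lia.
- have [le_l | lt_l] := leqP l (s %/ 2 + m + 2); first lia.
  have /metatile_span [u Tu span] : 0 < s %/ 2 + m + 2 < l by lia.
  suff : u %/ 2 = s %/ 2 by lia.
  by apply: overlap_start Tu _ _; lia.
Qed.

Lemma comb_start_uniq {s t : 'I_(l.*2)} : (true, s) \in T -> (true, t) \in T ->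
  s %/ 2 = t %/ 2 -> s = t.
Proof.
have T_tiling := metatile_tiling.
move=> Ts Tt est; have [ost | nst] := eqVneq (odd s) (odd t); first by apply: val_inj => /=; lia.
have [s0 sl] := twin_combs_fill Ts Tt est nst.
(* The two combs cover the whole board, leaving no room for the half-square of a mixed
   tiling. *)
case/andP: T_mixed => /exists_inP [[[] w] // Tw _] _.
have no_room (u : 'I_(l.*2)) : (true, u) \in T -> u %/ 2 = 0 -> odd w = odd u -> False.
  move=> Tu u0 owu; suff : (false, w) = (true, u) by [].
  apply: (tiling_disjoint T_tiling w Tw Tu); rewrite /= ?mem_teeth_square ?mem_teeth_comb //.
  by move: (ltn_ord w) => lt_w; rewrite owu eqxx andbT; apply/andP; split; lia.
exfalso; have [ows | nws] := eqVneq (odd w) (odd s); first exact: no_room s Ts s0 ows.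
by apply: (no_room t Tt); [lia | move: nst nws; case: (odd w); case: (odd s); case: (odd t)].
Qed.

Lemma comb_rows_alternate {s t : 'I_(l.*2)} : (true, s) \in T -> (true, t) \in T ->
  s %/ 2 < t %/ 2 -> odd t = odd s (+) odd (count_range (comb_start T) (s %/ 2) (t %/ 2)).
Proof.
have T_tiling := metatile_tiling; set F := comb_start T.
move=> Ts Tt lt_st; have [d ed] : exists d, t %/ 2 = s %/ 2 + d.+1.
  by exists (t %/ 2 - (s %/ 2).+1); lia.
elim/ltn_ind: d s t Ts Tt ed {lt_st} => d IH s t Ts Tt ed.
have [none | some] := posnP (count_range F (s %/ 2).+1 (t %/ 2)).
- rewrite (count_range_split F (_ : s %/ 2 <= s %/ 2 < t %/ 2) (comb_start_in Ts)); last lia.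
  rewrite count_range_geq // none /= addbT.
  have [ost | nst] := eqVneq (odd s) (odd t); last by move: nst; case: (odd s); case: (odd t).
  (* Two consecutive combs in one row would overlap or leave a cut point between them. *)
  exfalso; have [near | far] := leqP (t %/ 2) (s %/ 2 + m + 1).
    have est : s = t by apply: (comb_overlap T_tiling Ts Tt ost); lia.
    by move: ed; rewrite est; lia.
  have fit := comb_fit T_tiling Tt.
  have /metatile_span [u Tu span] : 0 < s %/ 2 + m + 2 < l by lia.
  have : 0 < count_range F (s %/ 2).+1 (t %/ 2).
    by apply: (count_range_gt0 F (u %/ 2)) (comb_start_in Tu); lia.
  by rewrite none.
- have [c [hc Fc] _] := count_range_last F some; have [u Tu uc] := comb_startP Fc.
  have su : odd u = odd s (+) odd (count_range F (s %/ 2) (u %/ 2)).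
    by apply: (IH (u %/ 2 - (s %/ 2).+1)) => //; lia.
  have ut : odd t = odd u (+) odd (count_range F (u %/ 2) (t %/ 2)).
    by apply: (IH (t %/ 2 - (u %/ 2).+1)) => //; lia.
  rewrite ut su -addbA -oddD -(@count_range_cat F _ (u %/ 2)) //; lia.
Qed.

Lemma metatile_length_gt1 : 1 < l.
Proof.
case/andP: T_mixed => _ /exists_inP [[[] s] // Ts _].
by have := comb_fit metatile_tiling Ts; lia.
Qed.

Lemma comb_row (s : 'I_(l.*2)) : (true, s) \in T ->
  odd s = comb_at_slot1 T (+) odd (count_range (comb_start T) 0 (s %/ 2)).
Proof.
move=> Ts; have /metatile_span [s0 T0 span0] : 0 < 1 < l by rewrite metatile_length_gt1.
have first_row : comb_at_slot1 T = odd s0.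
  apply/exists_inP/idP => [[[[] w] Tw //= /eqP w1] | odd_s0].
    by rewrite -(comb_start_uniq Tw T0) ?w1 //; lia.
  by exists (true, s0) => //=; apply/eqP; lia.
have [s_0 | s_gt0] := posnP (s %/ 2).
  by rewrite (comb_start_uniq Ts T0) ?s_0 ?count_range_geq ?first_row ?addbF //; lia.
have s0_0 : s0 %/ 2 = 0 by lia.
by rewrite first_row (comb_rows_alternate T0 Ts) s0_0.
Qed.

End Metatile.

Arguments metatile_tiling {T}.
Arguments comb_row {T} T_meta T_mixed {s}.

Lemma metatile_comb_sub {T1 T2 : {set slot}} : mixed_metatile T1 -> mixed_metatile T2 ->
  comb_at_slot1 T1 = comb_at_slot1 T2 -> comb_start T1 =1 comb_start T2 ->
  forall s, (true, s) \in T1 -> (true, s) \in T2.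
Proof.
move=> /andP [M1 X1] /andP [M2 X2] e1 est s Ts.
have /comb_startP [t Tt ets] : comb_start T2 (s %/ 2) by rewrite -est comb_start_in.
suff -> : s = t by [].
have := comb_row M1 X1 Ts; have := comb_row M2 X2 Tt.
rewrite ets -e1 (eq_count_range _ _ est) => <- ost.
by apply: val_inj => /=; lia.
Qed.

Lemma metatile_sub {T1 T2 : {set slot}} : mixed_metatile T1 -> mixed_metatile T2 ->
  comb_at_slot1 T1 = comb_at_slot1 T2 -> comb_start T1 =1 comb_start T2 -> T1 \subset T2.
Proof.
move=> M1 M2 e1 est; apply/subsetP => -[[] s Ts]; first exact: metatile_comb_sub M1 M2 e1 est s Ts.
have T2_tiling := metatile_tiling (proj1 (andP M2)).
have [[[] t] Tt] := tiling_cover T2_tiling (ltn_ord s); rewrite /= ?mem_teeth_square.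
- move=> st; have Tt1 := metatile_comb_sub M2 M1 (esym e1) (fun c => esym (est c)) t Tt.
  have T1_tiling := metatile_tiling (proj1 (andP M1)).
  by have := tiling_disjoint T1_tiling s Ts Tt1; rewrite /= mem_teeth_square eqxx => /(_ isT st).
- by move=> /eqP/val_inj ->.
Qed.

Lemma metatile_inj (T1 T2 : {set slot}) : mixed_metatile T1 -> mixed_metatile T2 ->
  comb_at_slot1 T1 = comb_at_slot1 T2 -> comb_start T1 =1 comb_start T2 -> T1 = T2.
Proof.
move=> M1 M2 e1 est; apply/eqP; rewrite eqEsubset (metatile_sub M1 M2) //.
by rewrite (metatile_sub M2 M1) // => c; rewrite est.
Qed.

Section CombTiling.
Variables (r : bool) (f : pred nat).
Hypotheses (l_gt1 : 1 < l) (adm_f : admissible m l f).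

(* Rows alternate from comb to comb, starting with row [r]; half-squares fill the rest. *)
Definition comb_slot_ok (s : nat) :=
  f (s %/ 2) && (odd s == r (+) odd (count_range f 0 (s %/ 2))).

Definition comb_covered (j : nat) :=
  [exists s : 'I_(l.*2), comb_slot_ok s && (j \in teeth 1 (m + 2) true s)].

Definition comb_tiling : {set slot} :=
  [set p : slot | if p.1 then comb_slot_ok p.2 else ~~ comb_covered p.2].

Lemma comb_slot_ok_overlap {s1 s2 j} : comb_slot_ok s1 -> comb_slot_ok s2 ->
  j \in teeth 1 (m + 2) true s1 -> j \in teeth 1 (m + 2) true s2 -> s1 %/ 2 < s2 %/ 2 -> False.
Proof.
rewrite /comb_slot_ok !mem_teeth_comb => /andP [f1 /eqP o1] /andP [f2 /eqP o2].
move=> /and3P [le1 le1' /eqP oj1] /and3P [le2 le2' /eqP oj2] lt12.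
have fit2 := admissible_fit adm_f f2.
have window : count_range f (s1 %/ 2) (s2 %/ 2).+1 <= 2 by apply: (admissible_window adm_f); lia.
rewrite count_range_recr ?f2 in window; last lia.
have between : 0 < count_range f (s1 %/ 2) (s2 %/ 2).
  by apply: (count_range_gt0 f (s1 %/ 2)) f1; lia.
(* Exactly one comb starts between the two, so they lie in different rows. *)
have one : count_range f (s1 %/ 2) (s2 %/ 2) = 1 by lia.
move: o2; rewrite (@count_range_cat f 0 (s1 %/ 2)) ?(ltnW lt12) // one addn1 /=.
by rewrite -oj2 oj1 o1; case: r; case: (odd _).
Qed.

Lemma comb_slot_ok_disjoint {s1 s2 j} : comb_slot_ok s1 -> comb_slot_ok s2 ->
  j \in teeth 1 (m + 2) true s1 -> j \in teeth 1 (m + 2) true s2 -> s1 = s2.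
Proof.
move=> ok1 ok2 j1 j2; case: (ltngtP (s1 %/ 2) (s2 %/ 2)) => [lt12 | lt21 | e12].
- by case: (comb_slot_ok_overlap ok1 ok2 j1 j2 lt12).
- by case: (comb_slot_ok_overlap ok2 ok1 j2 j1 lt21).
- by move: j1 j2; rewrite !mem_teeth_comb => /and3P [_ _ /eqP o1] /and3P [_ _ /eqP o2]; lia.
Qed.

Definition comb_slot (c : nat) := c.*2 + (r (+) odd (count_range f 0 c)).

Lemma comb_slot_half c : comb_slot c %/ 2 = c.
Proof. by rewrite /comb_slot; case: (_ (+) _) => /=; lia. Qed.

Lemma comb_slot_in {c} : f c -> exists2 s : 'I_(l.*2), (true, s) \in comb_tiling & s %/ 2 = c.
Proof.
move=> fc; have lt_sl : comb_slot c < l.*2.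
  by have := admissible_fit adm_f fc; rewrite /comb_slot; case: (_ (+) _) => /=; lia.
exists (Ordinal lt_sl); last exact: comb_slot_half.
rewrite inE /= /comb_slot_ok comb_slot_half fc /= /comb_slot oddD odd_double /=.
by case: (_ (+) _).
Qed.

Lemma comb_tiling_teeth_lt p j : p \in comb_tiling -> j \in teeth 1 (m + 2) p.1 p.2 -> j < l.*2.
Proof.
case: p => [[] s]; rewrite inE /=; last by rewrite mem_teeth_square => _ /eqP ->.
move=> /andP [fs _]; rewrite mem_teeth_comb => /and3P [_ le_j _].
by have := admissible_fit adm_f fs; lia.
Qed.

Lemma comb_tiling_cover1 (j : 'I_(l.*2)) :
  #|[set p in comb_tiling | (j : nat) \in teeth 1 (m + 2) p.1 p.2]| == 1.
Proof.
apply/cards1P; have [/existsP [s0 /andP [ok0 j0]] | free] := boolP (comb_covered j).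
- exists (true, s0); apply/setP => -[[] s]; rewrite !inE.
    apply/idP/idP => [/andP [ok js] | /eqP [->]]; last by rewrite ok0 j0.
    by apply/eqP; congr (_, _); apply: val_inj; exact: comb_slot_ok_disjoint ok ok0 js j0.
  rewrite /= double0 addn0; apply/negbTE/andP => -[+ /eqP ejs]; rewrite -ejs => /negP; apply.
  by apply/existsP; exists s0; rewrite ok0.
- exists (false, j); apply/setP => -[[] s]; rewrite !inE.
    apply/negbTE/andP => -[ok js]; move/negP: free; apply.
    by apply/existsP; exists s; rewrite ok.
  by rewrite /= double0 addn0; apply/andP/eqP => [[_ /eqP /val_inj ->] | [->]].
Qed.

Lemma comb_tiling_tiling : is_tiling 1 (m + 2) l comb_tiling.
Proof.
apply/andP; split; last by apply/forallP => j; exact: comb_tiling_cover1.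
by apply/forall_inP => p Tp; apply/allP => j; exact: comb_tiling_teeth_lt.
Qed.

Lemma comb_tiling_metatile : is_metatile 1 (m + 2) l comb_tiling.
Proof.
rewrite /is_metatile comb_tiling_tiling; apply/forallP => x; apply/implyP => x_gt0.
have /(admissible_cover adm_f) [c /andP [le_c lt_cx] fc] : 0 < x < l by rewrite x_gt0 /=.
have [s Ts sc] := comb_slot_in fc.
by apply: (comb_not_cut _ _ _ Ts); lia.
Qed.

Lemma comb_tiling_mixed : is_mixed l comb_tiling.
Proof.
have f0 := admissible_start0 adm_f l_gt1.
apply/andP; split; apply/exists_inP; last by have [s Ts _] := comb_slot_in f0; exists (true, s).
(* The comb starting in cell 0 lies in row [r], so the other slot of cell 0 holds a
   half-square. *)
have lt_j : (~~ r : nat) < l.*2 by case: r => /=; lia.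
exists (false, Ordinal lt_j) => //; rewrite inE /=.
apply/negP => /existsP [s /andP [/andP [fs /eqP os] /[!mem_teeth_comb] /and3P [le_s _ /eqP oj]]].
have s0 : s %/ 2 = 0 by case: r le_s oj => /=; lia.
by move: os; rewrite s0 count_range_geq // addbF -oj; case: r.
Qed.

Lemma comb_tiling_at_slot1 : comb_at_slot1 comb_tiling = r.
Proof.
apply/exists_inP/idP => [[[[] s] // Ts /eqP s1] | r_true].
  by move: Ts; rewrite inE /= /comb_slot_ok s1 count_range_geq // addbF => /andP [_ /eqP <-].
have lt_1 : 1 < l.*2 by lia.
exists (true, Ordinal lt_1) => //.
rewrite inE /= /comb_slot_ok (_ : 1 %/ 2 = 0) // count_range_geq //.
by rewrite (admissible_start0 adm_f l_gt1) r_true.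
Qed.

Lemma comb_tiling_starts : comb_start comb_tiling =1 f.
Proof.
move=> c; apply/idP/idP => [/comb_startP [s] | fc].
  by rewrite inE => /andP [fs _] <-.
by have [s Ts <-] := comb_slot_in fc; exact: comb_start_in Ts.
Qed.

End CombTiling.

End Tilings.

Definition ord_set (l : nat) (f : pred nat) : {set 'I_l} := [set c : 'I_l | f c].

Definition nat_pred {l} (F : {set 'I_l}) (x : nat) := x \in map val (enum F).

Lemma nat_pred_ord {l} (F : {set 'I_l}) (i : 'I_l) : nat_pred F i = (i \in F).
Proof. by rewrite /nat_pred (mem_map val_inj) mem_enum. Qed.

Lemma nat_pred_lt {l} (F : {set 'I_l}) x : nat_pred F x -> x < l.
Proof. by case/mapP => i _ ->; exact: ltn_ord. Qed.

Lemma ord_set_nat_pred {l} (F : {set 'I_l}) : ord_set l (nat_pred F) = F.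
Proof. by apply/setP => i; rewrite inE nat_pred_ord. Qed.

Lemma nat_pred_ord_set {l} {f : pred nat} :
  (forall x, f x -> x < l) -> nat_pred (ord_set l f) =1 f.
Proof.
move=> f_lt x; apply/idP/idP => [/[dup] /nat_pred_lt lt_xl | fx]; last first.
  by rewrite -[x]/(nat_of_ord (Ordinal (f_lt x fx))) nat_pred_ord inE.
by rewrite -[x]/(nat_of_ord (Ordinal lt_xl)) nat_pred_ord inE.
Qed.

Section Counting.
Variables (m L : nat).
Local Notation l := L.+2.
Local Notation n := L.+1.
Local Notation W := [:: (-2)%Z; (-1)%Z; (m : int)].

Definition mixed_metatiles :=
  [set T : {set bool * 'I_(l.*2)} | is_metatile 1 (m + 2) l T && is_mixed l T].
Definition admissible_perms := [set s : 'S_n | jumps_in W s].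

Definition metatile_code (T : {set bool * 'I_(l.*2)}) :=
  (comb_at_slot1 l T, ord_set l (comb_start l T)).
Definition perm_code (s : 'S_n) := ord_set l (long_jump m n s).

Lemma mixed_metatile_starts {T} : T \in mixed_metatiles -> admissible m l (comb_start l T).
Proof. by rewrite inE => /andP [M X]; exact: admissible_comb_starts M X. Qed.

Lemma metatile_code_inj : {in mixed_metatiles &, injective metatile_code}.
Proof.
move=> T1 T2 T1m T2m [e1 est].
have lt1 := admissible_lt (mixed_metatile_starts T1m).
have lt2 := admissible_lt (mixed_metatile_starts T2m).
move: T1m T2m; rewrite !inE => M1 M2; apply: metatile_inj M1 M2 e1 _ => c.
by rewrite -(nat_pred_ord_set lt1) -(nat_pred_ord_set lt2) est.
Qed.

Lemma perm_code_inj : {in admissible_perms &, injective perm_code}.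
Proof.
move=> s t; rewrite !inE /perm_code => s_ok t_ok est.
have lt_s := admissible_lt (admissible_long_jumps s_ok).
have lt_t := admissible_lt (admissible_long_jumps t_ok).
apply: long_jump_inj s_ok t_ok _ => x.
by rewrite -(nat_pred_ord_set lt_s) -(nat_pred_ord_set lt_t) est.
Qed.

Lemma metatile_codeP b F :
  (b, F) \in metatile_code @: mixed_metatiles <-> admissible m l (nat_pred F).
Proof.
split => [/imsetP [T] | adm_F].
  move=> Tm [_ ->]; have adm := mixed_metatile_starts Tm; have lt_T := admissible_lt adm.
  by apply: eq_admissible adm => c; rewrite (nat_pred_ord_set lt_T).
apply/imsetP; exists (comb_tiling m l b (nat_pred F)).
  by rewrite inE comb_tiling_metatile ?comb_tiling_mixed.
rewrite /metatile_code comb_tiling_at_slot1 //; congr (_, _).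
by rewrite -[LHS]ord_set_nat_pred; apply/setP => c; rewrite !inE comb_tiling_starts.
Qed.

Lemma perm_codeP F : F \in perm_code @: admissible_perms <-> admissible m l (nat_pred F).
Proof.
split => [/imsetP [s] | adm_F].
  rewrite inE => s_ok ->; have adm := admissible_long_jumps s_ok; have lt_s := admissible_lt adm.
  by apply: eq_admissible adm => x; rewrite (nat_pred_ord_set lt_s).
apply/imsetP; exists (long_jump_perm m n (nat_pred F) (ltn0Sn L) adm_F).
  by rewrite inE long_jump_perm_ok.
by rewrite -[LHS]ord_set_nat_pred; apply/setP => c; rewrite !inE long_jump_permP.
Qed.

Lemma mu_eq_twice_P : mu 1 (m + 2) l = 2 * P W n.
Proof.
rewrite /mu -/mixed_metatiles -(card_in_imset metatile_code_inj).
rewrite /P -/(admissible_perms) -(card_in_imset perm_code_inj).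
suff -> : metatile_code @: mixed_metatiles = setX [set: bool] (perm_code @: admissible_perms).
  by rewrite cardsX cardsT card_bool.
apply/setP => -[b F]; rewrite !inE /=.
by apply/idP/idP => [/metatile_codeP /perm_codeP | /perm_codeP /metatile_codeP].
Qed.

End Counting.

Theorem theorem3 (m l : nat) : 1 < l ->
  mu 1 (m + 2) l = 2 * P [:: (-2)%Z; (-1)%Z; (m : int)] (l - 1).
Proof. by case: l => [|[|L]] // _; exact: mu_eq_twice_P. Qed.
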